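(* For all positive integers $m$ and all $p,q\in[0,1]$, \[ \ell_1(\mathrm{Bin}(m,p),\mathrm{Bin}(m,q))\ge\frac1{350}\min\left(m|p-q|,\frac{\sqrt m\,|p-q|}{\sqrt{p(1-p)}},1\right). \]
   Context: $\ell_1(P,Q)=\sum_x|P(x)-Q(x)|$. When $p(1-p)=0$ the middle term is interpreted as $+\infty$ if $p\ne q$. *)

From Stdlib Require Import Reals.
Open Scope R_scope.

Definition binom_pmf (m : nat) (p : R) (k : nat) : R :=
  Binomial.C m k * p ^ k * (1 - p) ^ (m - k).

Definition l1_binom (m : nat) (p q : R) : R :=
  sum_f_R0 (fun k => Rabs (binom_pmf m p k - binom_pmf m q k)) m.

(* min(m|p-q|, sqrt m |p-q| / sqrt(p(1-p)), 1), where the middle term is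
   +infinity when p(1-p)=0 (and p<>q), i.e. it is dropped from the min.
   When p(1-p)=0 and p=q the first term is 0 so the min is 0 under any
   interpretation of the middle term. *)
Definition rhs_min (m : nat) (p q : R) : R :=
  if Req_EM_T (p * (1 - p)) 0 then Rmin (INR m * Rabs (p - q)) 1
  else Rmin (Rmin (INR m * Rabs (p - q))
                  (sqrt (INR m) * Rabs (p - q) / sqrt (p * (1 - p)))) 1.

From Stdlib Require Import Reals Lra Lia ZArith.
From Coquelicot Require Import Coquelicot.
Open Scope R_scope.

(* Write E_t g for the mean of g under Bin(m, t). A test function g with
   values in [0, J] gives E_q g - E_p g <= l1 * J / 2.  Take for g the ramp
   min((k - A)_+, J), whose increments are the indicator of [A, A + J), with
   this window covering [n t - s, n t + s] (n = m - 1) for every t between p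
   and q, where s^2 = 2 (m p (1 - p) + m |p - q|) is at least twice the
   variance of Bin(n, t).  Since d/dt E_t g = m E'_t (g (j + 1) - g j), with
   E' the mean under Bin(n, t), Chebyshev's inequality makes this derivative
   at least m / 2, hence l1 * J >= m |p - q|.  As J can be taken
   <= m |p - q| + 2 s + 2, the three terms of the minimum follow by
   elementary estimates. *)

Lemma sum_f_R0_lin (f g : nat -> R) (a b : R) (N : nat) :
  sum_f_R0 (fun k => a * f k + b * g k) N = a * sum_f_R0 f N + b * sum_f_R0 g N.
Proof. induction N as [|N IH]; simpl; [|rewrite IH]; ring. Qed.

Lemma C_absorb (n j : nat) : (j <= n)%nat ->
  INR (S j) * Binomial.C (S n) (S j) = INR (S n) * Binomial.C n j.
Proof.
  intros Hj. unfold Binomial.C.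
  replace (S n - S j)%nat with (n - j)%nat by lia.
  rewrite !fact_simpl, !mult_INR.
  assert (INR (S j) <> 0) by (apply not_0_INR; lia).
  field. repeat split; auto using INR_fact_neq_0.
Qed.

Lemma C_absorb_compl (n k : nat) : (k <= n)%nat ->
  INR (S n - k) * Binomial.C (S n) k = INR (S n) * Binomial.C n k.
Proof.
  intros Hk. rewrite pascal_step2 by exact Hk.
  assert (INR (S n - k) <> 0) by (apply not_0_INR; lia).
  field. assumption.
Qed.

Lemma binom_pmf_nonneg (m : nat) (t : R) (k : nat) : 0 <= t <= 1 -> 0 <= binom_pmf m t k.
Proof.
  intros Ht. unfold binom_pmf, Binomial.C.
  assert (0 < INR (fact k) * INR (fact (m - k)))
    by (apply Rmult_lt_0_compat; apply INR_fact_lt_0).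
  repeat apply Rmult_le_pos; try apply pow_le; try lra.
  - apply pos_INR.
  - apply Rlt_le, Rinv_0_lt_compat; assumption.
Qed.

Definition binom_expect (g : nat -> R) (m : nat) (t : R) : R :=
  sum_f_R0 (fun k => g k * binom_pmf m t k) m.

Lemma binom_expect_ext (f g : nat -> R) (m : nat) (t : R) :
  (forall k, (k <= m)%nat -> f k = g k) -> binom_expect f m t = binom_expect g m t.
Proof. intros H. apply sum_eq. intros k Hk. now rewrite H. Qed.

Lemma binom_expect_lin (f g : nat -> R) (a b : R) (m : nat) (t : R) :
  binom_expect (fun k => a * f k + b * g k) m t
  = a * binom_expect f m t + b * binom_expect g m t.
Proof. unfold binom_expect. rewrite <- sum_f_R0_lin. apply sum_eq. intros. ring. Qed.

Lemma binom_expect_one (m : nat) (t : R) : binom_expect (fun _ => 1) m t = 1.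
Proof.
  transitivity ((t + (1 - t)) ^ m).
  - unfold binom_expect. rewrite binomial. apply sum_eq. intros. unfold binom_pmf. ring.
  - rewrite Rplus_minus. apply pow1.
Qed.

Lemma binom_expect_shift (f : nat -> R) (n : nat) (t : R) :
  binom_expect (fun k => INR k * f k) (S n) t
  = INR (S n) * t * binom_expect (fun j => f (S j)) n t.
Proof.
  unfold binom_expect. rewrite decomp_sum by lia. simpl pred.
  replace (INR 0 * f 0%nat * binom_pmf (S n) t 0) with 0 by (simpl; ring).
  rewrite Rplus_0_l, scal_sum. apply sum_eq. intros j Hj. unfold binom_pmf.
  replace (S n - S j)%nat with (n - j)%nat by lia.
  transitivity (f (S j) * (INR (S j) * Binomial.C (S n) (S j)) * t ^ S j * (1 - t) ^ (n - j));
    [ring|].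
  rewrite C_absorb by exact Hj. simpl pow. ring.
Qed.

Lemma binom_mean (m : nat) (t : R) : binom_expect INR m t = INR m * t.
Proof.
  destruct m as [|n]; [unfold binom_expect; simpl; ring|].
  rewrite (binom_expect_ext _ (fun k => INR k * 1)) by (intros; ring).
  rewrite binom_expect_shift, binom_expect_one. ring.
Qed.

Lemma binom_factorial_moment2 (m : nat) (t : R) :
  binom_expect (fun k => INR k * (INR k - 1)) m t = INR m * (INR m - 1) * t ^ 2.
Proof.
  destruct m as [|n]; [unfold binom_expect; simpl; ring|].
  rewrite binom_expect_shift.
  rewrite (binom_expect_ext _ INR) by (intros; rewrite S_INR; ring).
  rewrite binom_mean, S_INR. ring.
Qed.

Lemma binom_variance (m : nat) (t : R) :
  binom_expect (fun k => (INR k - INR m * t) ^ 2) m t = INR m * t * (1 - t).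
Proof.
  rewrite (binom_expect_ext _ (fun k => 1 * (INR k * (INR k - 1))
             + 1 * ((1 - 2 * INR m * t) * INR k + (INR m * t) ^ 2 * 1)))
    by (intros; ring).
  rewrite !binom_expect_lin, binom_factorial_moment2, binom_mean, binom_expect_one.
  ring.
Qed.

Definition binom_pmf_dpos (m : nat) (t : R) (k : nat) : R :=
  Binomial.C m k * INR k * t ^ pred k * (1 - t) ^ (m - k).

Definition binom_pmf_dneg (m : nat) (t : R) (k : nat) : R :=
  Binomial.C m k * INR (m - k) * t ^ k * (1 - t) ^ pred (m - k).

Lemma is_derive_binom_pmf (m k : nat) (t : R) :
  is_derive (fun x => binom_pmf m x k) t (binom_pmf_dpos m t k - binom_pmf_dneg m t k).
Proof.
  unfold binom_pmf. auto_derive; [trivial|].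
  unfold binom_pmf_dpos, binom_pmf_dneg, Rminus. ring.
Qed.

Lemma sum_binom_pmf_dpos (g : nat -> R) (n : nat) (t : R) :
  sum_f_R0 (fun k => g k * binom_pmf_dpos (S n) t k) (S n)
  = INR (S n) * binom_expect (fun j => g (S j)) n t.
Proof.
  rewrite decomp_sum by lia. simpl pred.
  replace (binom_pmf_dpos (S n) t 0) with 0 by (unfold binom_pmf_dpos; simpl; ring).
  rewrite Rmult_0_r, Rplus_0_l. unfold binom_expect. rewrite scal_sum.
  apply sum_eq. intros j Hj. unfold binom_pmf_dpos, binom_pmf. simpl pred.
  replace (S n - S j)%nat with (n - j)%nat by lia.
  transitivity (g (S j) * (INR (S j) * Binomial.C (S n) (S j)) * t ^ j * (1 - t) ^ (n - j));
    [ring|].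
  rewrite C_absorb by exact Hj. ring.
Qed.

Lemma sum_binom_pmf_dneg (g : nat -> R) (n : nat) (t : R) :
  sum_f_R0 (fun k => g k * binom_pmf_dneg (S n) t k) (S n)
  = INR (S n) * binom_expect g n t.
Proof.
  rewrite tech5.
  replace (binom_pmf_dneg (S n) t (S n)) with 0
    by (unfold binom_pmf_dneg; rewrite Nat.sub_diag; simpl; ring).
  rewrite Rmult_0_r, Rplus_0_r. unfold binom_expect. rewrite scal_sum.
  apply sum_eq. intros k Hk. unfold binom_pmf_dneg, binom_pmf.
  replace (pred (S n - k)) with (n - k)%nat by lia.
  transitivity (g k * (INR (S n - k) * Binomial.C (S n) k) * t ^ k * (1 - t) ^ (n - k));
    [ring|].
  rewrite C_absorb_compl by exact Hk. ring.
Qed.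

Lemma is_derive_sum_f_R0 (f : nat -> R -> R) (f' : nat -> R) (N : nat) (x : R) :
  (forall k, is_derive (f k) x (f' k)) ->
  is_derive (fun t => sum_f_R0 (fun k => f k t) N) x (sum_f_R0 f' N).
Proof.
  intros H. induction N as [|N IH]; [exact (H 0%nat)|].
  exact (is_derive_plus (fun t => sum_f_R0 (fun k => f k t) N) (f (S N)) _ _ _ IH (H (S N))).
Qed.

Lemma is_derive_binom_expect (g : nat -> R) (n : nat) (t : R) :
  is_derive (binom_expect g (S n)) t
    (INR (S n) * binom_expect (fun j => g (S j) - g j) n t).
Proof.
  replace (INR (S n) * binom_expect (fun j => g (S j) - g j) n t)
    with (sum_f_R0 (fun k => g k * (binom_pmf_dpos (S n) t k - binom_pmf_dneg (S n) t k)) (S n)).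
  - apply (is_derive_sum_f_R0 (fun k x => g k * binom_pmf (S n) x k)).
    intros k. apply is_derive_scal, is_derive_binom_pmf.
  - rewrite (sum_eq _ (fun k => 1 * (g k * binom_pmf_dpos (S n) t k)
                               + (-1) * (g k * binom_pmf_dneg (S n) t k)))
      by (intros; ring).
    rewrite sum_f_R0_lin, sum_binom_pmf_dpos, sum_binom_pmf_dneg.
    rewrite (binom_expect_ext (fun j => g (S j) - g j) (fun j => 1 * g (S j) + (-1) * g j)) by (intros; ring).
    rewrite binom_expect_lin. ring.
Qed.

Lemma l1_binom_nonneg (m : nat) (p q : R) : 0 <= l1_binom m p q.
Proof. apply cond_pos_sum. intros. apply Rabs_pos. Qed.

Lemma l1_binom_sym (m : nat) (p q : R) : l1_binom m p q = l1_binom m q p.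
Proof. apply sum_eq. intros. apply Rabs_minus_sym. Qed.

Lemma binom_expect_sub_le_l1 (g : nat -> R) (M : R) (m : nat) (p q : R) :
  (forall k, (k <= m)%nat -> 0 <= g k <= M) ->
  binom_expect g m q - binom_expect g m p <= l1_binom m p q * (M / 2).
Proof.
  intros Hg.
  assert (E : binom_expect g m q - binom_expect g m p
              = sum_f_R0 (fun k => (g k - M / 2) * (binom_pmf m q k - binom_pmf m p k)) m).
  { rewrite (sum_eq _ (fun k => (g k - M / 2) * binom_pmf m q k
                                - (g k - M / 2) * binom_pmf m p k)) by (intros; ring).
    rewrite minus_sum.
    change (binom_expect g m q - binom_expect g m p
            = binom_expect (fun k => g k - M / 2) m q - binom_expect (fun k => g k - M / 2) m p).
    rewrite !(binom_expect_ext (fun k => g k - M / 2) (fun k => 1 * g k + (- (M / 2)) * 1))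
      by (intros; ring).
    rewrite !binom_expect_lin, !binom_expect_one. ring. }
  rewrite E. eapply Rle_trans; [apply Rle_abs|].
  eapply Rle_trans; [apply sum_f_R0_triangle|].
  unfold l1_binom. rewrite (Rmult_comm (sum_f_R0 _ m)), scal_sum.
  apply sum_Rle. intros k Hk.
  rewrite Rabs_mult, (Rabs_minus_sym (binom_pmf m q k)), Rmult_comm.
  apply Rmult_le_compat_l; [apply Rabs_pos|].
  specialize (Hg k Hk). apply Rabs_le. lra.
Qed.

Definition ramp (A J k : nat) : R := INR (Nat.min (k - A) J).

Lemma ramp_bounds (A J k : nat) : 0 <= ramp A J k <= INR J.
Proof. split; [apply pos_INR | apply le_INR; lia]. Qed.

Lemma ramp_increment_ge (A J : nat) (mu s : R) (j : nat) : 0 < s ->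
  (forall i, (i < A)%nat -> INR i <= mu - s) -> mu + s <= INR (A + J) ->
  1 - (INR j - mu) ^ 2 / s ^ 2 <= ramp A J (S j) - ramp A J j.
Proof.
  intros Hs HA HJ. unfold ramp.
  assert (Hs2 : 0 < s ^ 2) by (apply pow_lt; lra).
  assert (Hmono : INR (Nat.min (j - A) J) <= INR (Nat.min (S j - A) J)) by (apply le_INR; lia).
  assert (Hfar : s <= Rabs (INR j - mu) -> 1 - (INR j - mu) ^ 2 / s ^ 2 <= 0).
  { intros Hd. rewrite <- (pow2_abs (INR j - mu)).
    assert (1 <= Rabs (INR j - mu) ^ 2 / s ^ 2) by (apply Rle_div_r; nra).
    lra. }
  destruct (le_lt_dec A j) as [H1|H1]; [destruct (lt_dec j (A + J)) as [H2|H2]|].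
  - replace (Nat.min (S j - A) J) with (S (Nat.min (j - A) J)) by lia.
    rewrite S_INR.
    assert (0 <= (INR j - mu) ^ 2 / s ^ 2)
      by (apply Rdiv_le_0_compat; [apply pow2_ge_0 | assumption]).
    lra.
  - assert (INR (A + J) <= INR j) by (apply le_INR; lia).
    assert (Hd : s <= Rabs (INR j - mu)) by (rewrite Rabs_right; lra).
    specialize (Hfar Hd). lra.
  - assert (INR j <= mu - s) by (apply HA; exact H1).
    assert (Hd : s <= Rabs (INR j - mu)) by (rewrite Rabs_left1; lra).
    specialize (Hfar Hd). lra.
Qed.

Lemma binom_expect_ramp_increment_ge (A J n : nat) (x s : R) :
  0 <= x <= 1 -> 0 < s ->
  (forall i, (i < A)%nat -> INR i <= INR n * x - s) -> INR n * x + s <= INR (A + J) ->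
  1 - INR n * x * (1 - x) / s ^ 2
  <= binom_expect (fun j => ramp A J (S j) - ramp A J j) n x.
Proof.
  intros Hx Hs HA HJ.
  rewrite <- binom_variance.
  replace (1 - binom_expect (fun k => (INR k - INR n * x) ^ 2) n x / s ^ 2)
    with (binom_expect (fun k => 1 * 1 + (- / s ^ 2) * (INR k - INR n * x) ^ 2) n x)
    by (rewrite binom_expect_lin, binom_expect_one; unfold Rdiv; ring).
  apply sum_Rle. intros j _.
  apply Rmult_le_compat_r; [apply binom_pmf_nonneg; exact Hx|].
  replace (1 * 1 + - / s ^ 2 * (INR j - INR n * x) ^ 2)
    with (1 - (INR j - INR n * x) ^ 2 / s ^ 2) by (unfold Rdiv; ring).
  apply ramp_increment_ge; assumption.
Qed.

Lemma ramp_expect_increase (A J n : nat) (lo hi s : R) :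
  0 <= lo -> lo < hi -> hi <= 1 -> 0 < s ->
  (forall i, (i < A)%nat -> INR i <= INR n * lo - s) -> INR n * hi + s <= INR (A + J) ->
  (forall t, lo <= t <= hi -> INR n * t * (1 - t) <= s ^ 2 / 2) ->
  INR (S n) / 2 * (hi - lo)
  <= binom_expect (ramp A J) (S n) hi - binom_expect (ramp A J) (S n) lo.
Proof.
  intros Hlo Hlohi Hhi Hs HA HJ HV.
  destruct (MVT_cor2 (binom_expect (ramp A J) (S n))
              (fun c => INR (S n) * binom_expect (fun j => ramp A J (S j) - ramp A J j) n c)
              lo hi Hlohi) as [c [Hc Hc']].
  { intros c _. apply is_derive_Reals, is_derive_binom_expect. }
  rewrite Hc. apply Rmult_le_compat_r; [lra|].
  assert (Hn := pos_INR n). assert (Hs2 : 0 < s ^ 2) by (apply pow_lt; lra).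
  assert (Hhalf : 1 / 2 <= 1 - INR n * c * (1 - c) / s ^ 2).
  { assert (INR n * c * (1 - c) / s ^ 2 <= 1 / 2)
      by (apply Rle_div_l; [lra|]; specialize (HV c ltac:(lra)); lra).
    lra. }
  assert (1 / 2 <= binom_expect (fun j => ramp A J (S j) - ramp A J j) n c).
  { eapply Rle_trans; [exact Hhalf|].
    apply binom_expect_ramp_increment_ge; [lra | exact Hs | |].
    - intros i Hi. specialize (HA i Hi). nra.
    - nra. }
  assert (Hm := pos_INR (S n)). nra.
Qed.

Lemma l1_binom_ramp_lb (A J n : nat) (lo hi s : R) :
  0 <= lo -> lo < hi -> hi <= 1 -> 0 < s ->
  (forall i, (i < A)%nat -> INR i <= INR n * lo - s) -> INR n * hi + s <= INR (A + J) ->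
  (forall t, lo <= t <= hi -> INR n * t * (1 - t) <= s ^ 2 / 2) ->
  INR (S n) * (hi - lo) <= l1_binom (S n) lo hi * INR J.
Proof.
  intros Hlo Hlohi Hhi Hs HA HJ HV.
  pose proof (ramp_expect_increase A J n lo hi s Hlo Hlohi Hhi Hs HA HJ HV).
  pose proof (binom_expect_sub_le_l1 (ramp A J) (INR J) (S n) lo hi
                (fun k _ => ramp_bounds A J k)).
  lra.
Qed.

Lemma nat_count_le (x : R) :
  exists A : nat, (forall i, (i < A)%nat -> INR i <= x) /\ x < INR A.
Proof.
  destruct (Rlt_or_le x 0) as [Hx|Hx].
  - exists 0%nat. split; [intros; lia | simpl; lra].
  - destruct (archimed x) as [Hup Hup'].
    assert (Hpos : (0 < up x)%Z) by (apply lt_IZR; simpl; lra).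
    assert (HA : INR (Z.to_nat (up x)) = IZR (up x))
      by (rewrite INR_IZR_INZ, Z2Nat.id by lia; reflexivity).
    exists (Z.to_nat (up x)). split; [|lra].
    intros i Hi. assert (Hi' : INR (S i) <= INR (Z.to_nat (up x))) by (apply le_INR; lia).
    rewrite S_INR in Hi'. lra.
Qed.

Lemma nat_between (y z : R) : 0 <= z -> y + 1 <= z -> exists J : nat, y <= INR J <= z.
Proof.
  intros Hz Hyz. destruct (nat_count_le z) as [[|J] [HA HzA]]; [simpl in HzA; lra|].
  exists J. rewrite S_INR in HzA. split; [lra | apply HA; lia].
Qed.

Lemma l1_binom_interval_lb (n : nat) (p lo hi : R) :
  0 <= lo -> lo < hi -> hi <= 1 -> lo <= p <= hi ->
  let a := INR (S n) * (hi - lo) in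
  a <= l1_binom (S n) lo hi * (a + 2 * sqrt (2 * (INR (S n) * (p * (1 - p)) + a)) + 2).
Proof.
  intros Hlo Hlohi Hhi Hp a.
  set (s := sqrt (2 * (INR (S n) * (p * (1 - p)) + a))).
  assert (Hn := pos_INR n). assert (HSn := S_INR n).
  assert (Ha : 0 < a) by (unfold a; nra).
  assert (Hvar : 0 <= INR (S n) * (p * (1 - p))) by (apply Rmult_le_pos; [apply pos_INR | nra]).
  assert (Hs : 0 < s) by (apply sqrt_lt_R0; lra).
  assert (Hs2 : s ^ 2 = 2 * (INR (S n) * (p * (1 - p)) + a)) by (apply pow2_sqrt; lra).
  assert (HV : forall t, lo <= t <= hi -> INR n * t * (1 - t) <= s ^ 2 / 2).
  { intros t Ht.
    (* |t (1 - t) - p (1 - p)| = |t - p| |1 - t - p| <= hi - lo *)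
    assert (t * (1 - t) <= p * (1 - p) + (hi - lo)) by nra.
    unfold a in Hs2. nra. }
  destruct (nat_count_le (INR n * lo - s)) as [A [HA HAlo]].
  destruct (nat_between (INR n * hi + s - INR A) (a + 2 * s + 2)) as [J [HJlo HJhi]];
    [lra | unfold a; nra |].
  assert (HJ : INR n * hi + s <= INR (A + J)) by (rewrite plus_INR; lra).
  pose proof (l1_binom_ramp_lb A J n lo hi s Hlo Hlohi Hhi Hs HA HJ HV) as Hlb.
  fold a in Hlb.
  pose proof (l1_binom_nonneg (S n) lo hi). nra.
Qed.

Lemma l1_binom_lb (m : nat) (p q : R) :
  (0 < m)%nat -> 0 <= p <= 1 -> 0 <= q <= 1 ->
  let a := INR m * Rabs (p - q) in
  a <= l1_binom m p q * (a + 2 * sqrt (2 * (INR m * (p * (1 - p)) + a)) + 2).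
Proof.
  intros Hm Hp Hq a. destruct m as [|n]; [lia|].
  destruct (Rtotal_order p q) as [Hpq|[Hpq|Hpq]].
  - unfold a. rewrite Rabs_minus_sym, Rabs_right by lra.
    apply l1_binom_interval_lb; lra.
  - unfold a. subst q. rewrite Rminus_diag, Rabs_R0, Rmult_0_r.
    apply Rmult_le_pos; [apply l1_binom_nonneg|].
    pose proof (sqrt_pos (2 * (INR (S n) * (p * (1 - p)) + 0))). lra.
  - unfold a. rewrite Rabs_right, l1_binom_sym by lra.
    apply l1_binom_interval_lb; lra.
Qed.

Lemma le_11_mul_of_lb (a b l r : R) :
  0 <= a -> 0 <= b -> 0 <= l -> a <= l * (a + 2 * sqrt (2 * (b + a)) + 2) ->
  r <= a -> r <= 1 -> r * sqrt b <= a -> r <= 11 * l.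
Proof.
  intros Ha Hb Hl Hlb Hra Hr1 Hrb.
  destruct (Rle_or_lt r 0) as [Hr|Hr]; [lra|].
  set (s := sqrt (2 * (b + a))) in *.
  assert (Hsa := sqrt_pos a). assert (Hsb := sqrt_pos b).
  assert (Haa := sqrt_sqrt a Ha). assert (Hbb := sqrt_sqrt b Hb).
  assert (Hs : s <= 2 * sqrt b + 2 * sqrt a).
  { unfold s. rewrite <- (sqrt_square (2 * sqrt b + 2 * sqrt a)) by lra.
    apply sqrt_le_1_alt. nra. }
  assert (Hrsa : r <= sqrt a).
  { rewrite <- (sqrt_square r) by lra. apply sqrt_le_1_alt. nra. }
  assert (Hs0 : 0 <= s) by apply sqrt_pos.
  assert (HD : r * (a + 2 * s + 2) <= 11 * a) by nra.
  nra.
Qed.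

Lemma rhs_min_le_dist (m : nat) (p q : R) : rhs_min m p q <= INR m * Rabs (p - q).
Proof.
  unfold rhs_min. destruct (Req_EM_T _ 0).
  - apply Rmin_l.
  - eapply Rle_trans; apply Rmin_l.
Qed.

Lemma rhs_min_le_1 (m : nat) (p q : R) : rhs_min m p q <= 1.
Proof. unfold rhs_min. destruct (Req_EM_T _ 0); apply Rmin_r. Qed.

Lemma rhs_min_mul_sqrt_var_le (m : nat) (p q : R) : 0 <= p <= 1 ->
  rhs_min m p q * sqrt (INR m * (p * (1 - p))) <= INR m * Rabs (p - q).
Proof.
  intros Hp. assert (Hm := pos_INR m). unfold rhs_min.
  destruct (Req_EM_T (p * (1 - p)) 0) as [E|E].
  - rewrite E, Rmult_0_r, sqrt_0, Rmult_0_r.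
    apply Rmult_le_pos; [exact Hm | apply Rabs_pos].
  - assert (Hpp : 0 < sqrt (p * (1 - p))) by (apply sqrt_lt_R0; nra).
    rewrite (sqrt_mult_alt (INR m)) by exact Hm.
    apply Rle_trans with (sqrt (INR m) * Rabs (p - q) / sqrt (p * (1 - p))
                          * (sqrt (INR m) * sqrt (p * (1 - p)))).
    + apply Rmult_le_compat_r; [apply Rmult_le_pos; apply sqrt_pos|].
      eapply Rle_trans; [apply Rmin_l | apply Rmin_r].
    + right. field_simplify; [|lra]. rewrite pow2_sqrt by exact Hm. ring.
Qed.

Theorem lemma8 (m : nat) (p q : R) :
  (0 < m)%nat -> 0 <= p <= 1 -> 0 <= q <= 1 ->
  l1_binom m p q >= / 350 * rhs_min m p q.
Proof.
  intros Hm Hp Hq.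
  pose proof (l1_binom_lb m p q Hm Hp Hq) as Hlb. cbv zeta in Hlb.
  assert (Hpp : 0 <= INR m * (p * (1 - p))) by (apply Rmult_le_pos; [apply pos_INR | nra]).
  assert (Ha : 0 <= INR m * Rabs (p - q)) by (apply Rmult_le_pos; [apply pos_INR | apply Rabs_pos]).
  assert (Hl1 := l1_binom_nonneg m p q).
  pose proof (le_11_mul_of_lb _ _ _ (rhs_min m p q) Ha Hpp Hl1 Hlb
                (rhs_min_le_dist m p q) (rhs_min_le_1 m p q) (rhs_min_mul_sqrt_var_le m p q Hp)).
  lra.
Qed.
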